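(* Let $a,b,q$ be complex numbers with $q\ne0$, and define $B_{n,k}(a,b)$ ($n\ge k\ge0$) by $$z^k=\sum_{n=k}^\infty B_{n,k}(a,b)\,z^n\frac{(az;q)_n}{(bz;q)_n}\qquad(k\ge0)$$ in $\mathbb{C}[[z]]$. Then for every integer $n\ge1$, as rational functions of $y$, $$\sum_{k=0}^nB_{n,k}(a,b)y^k=\frac{(b/y;q)_{n-1}}{(a/y;q)_n}y^{n}-a\sum_{k=0}^{n-1}B_{n-k,1}(a,b)\,q^{(n-k)k}\frac{(b/y;q)_k}{(a/y;q)_{k+1}}y^k.$$
   Context: $(x;q)_n=\prod_{j=0}^{n-1}(1-xq^j)$ for $n\ge0$, $(x;q)_0=1$. The family $\{z^n(az;q)_n/(bz;q)_n\}_{n\ge0}$ is a basis of $\mathbb{C}[[z]]$ in the formal sense, so the $B_{n,k}(a,b)$ are uniquely determined. *)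

From HB Require Import structures.
From mathcomp Require Import all_boot all_order all_algebra.
From mathcomp Require Import complex.
From mathcomp Require Import reals.
Set Implicit Arguments. Unset Strict Implicit. Unset Printing Implicit Defensive.
Import Order.TTheory GRing.Theory Num.Theory.
Local Open Scope ring_scope.

Definition qpoch {F : comRingType} (x q : F) (n : nat) : F :=
  \prod_(j < n) (1 - x * q ^+ j).

(* (c z; q)_n as a polynomial in z *)
Definition qpochP {F : comRingType} (c q : F) (n : nat) : {poly F} :=
  \prod_(j < n) (1 - (c * q ^+ j)%:P * 'X).

(* s is the coefficient sequence of the formal power series
   z^n (a z;q)_n / (b z;q)_n, characterized by
   s * (b z;q)_n = z^n (a z;q)_n in F[[z]] (the denominator has constant term 1,
   so s is uniquely determined). *)
Definition is_basis_series {F : comRingType} (a b q : F) (n : nat) (s : nat -> F) :=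
  forall m : nat,
    \sum_(i < m.+1) s i * (qpochP b q n)`_(m - i) = ('X^n * qpochP a q n)`_m.

(* Work modulo z^(n+1) and write S_j for the truncation of z^j (az;q)_j/(bz;q)_j.
   As S_j = z^j + O(z^(j+1)), the S_j (j <= n) are independent, so it is enough
   to show that the left-hand sides L_j and the right-hand sides C_j both satisfy
   (1 - yz) sum_j c_j S_j = 1. For L_j, the definition of B turns sum_j L_j S_j
   into sum_k (yz)^k. For C_j, the relations S_(k+1) (1 - bq^k z) = z (1 - aq^k z) S_k
   and S_k(z) S_m(q^k z) = q^(mk) S_(k+m)(z), together with sum_m B_(m,1) S_m = z,
   give sum_m B_(m,1) q^(mk) S_(k+m) = q^k z S_k; after this substitution
   (1 - yz) sum_j C_j S_j telescopes to 1. *)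

From HB Require Import structures.
From mathcomp Require Import all_boot all_order all_algebra.
From mathcomp Require Import complex.
From mathcomp Require Import reals.
From mathcomp Require Import ring.
Import Order.TTheory GRing.Theory Num.Theory.
Set Implicit Arguments. Unset Strict Implicit.
Local Open Scope ring_scope.

Definition eqmodXn (F : fieldType) (N : nat) (p r : {poly F}) := 'X^N %| p - r.

Notation "p = r %[modXn N ]" := (eqmodXn N p r)
  (at level 70, r at next level, format "p  =  r  %[modXn  N ]") : ring_scope.

Section CongruenceModXn.
Variables (F : fieldType) (N : nat).
Implicit Types p r t u v : {poly F}.

Lemma eqmodXnP p r :
  reflect (forall i, (i < N)%N -> p`_i = r`_i) (p = r %[modXn N]).
Proof.
apply: (iffP idP) => [/divpK Hpr i iN | Hpr].
  by apply/eqP; rewrite -subr_eq0 -coefB -Hpr coefMXn iN.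
rewrite /eqmodXn -(poly_take_drop N (p - r)).
have -> : take_poly N (p - r) = 0.
  apply/polyP => i; rewrite coef_take_poly coef0 coefB.
  by case: ifP => // /Hpr ->; rewrite subrr.
by rewrite add0r dvdp_mull.
Qed.

Lemma eqmodXn_refl p : p = p %[modXn N].
Proof. by rewrite /eqmodXn subrr dvdp0. Qed.

Lemma eq_eqmodXn p r : p = r -> p = r %[modXn N].
Proof. by move=> ->; apply: eqmodXn_refl. Qed.

Lemma eqmodXn_sym p r : p = r %[modXn N] -> r = p %[modXn N].
Proof. by rewrite /eqmodXn -opprB dvdpNr. Qed.

Lemma eqmodXn_trans t p r : p = t %[modXn N] -> t = r %[modXn N] -> p = r %[modXn N].
Proof. by move=> Hpt Htr; rewrite /eqmodXn -(subrKA t) addrC dvdp_add. Qed.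

Lemma eqmodXnD p r p' r' :
  p = r %[modXn N] -> p' = r' %[modXn N] -> p + p' = r + r' %[modXn N].
Proof. by move=> H H'; rewrite /eqmodXn opprD addrACA dvdp_add. Qed.

Lemma eqmodXnB p r p' r' :
  p = r %[modXn N] -> p' = r' %[modXn N] -> p - p' = r - r' %[modXn N].
Proof. by move=> H H'; apply: eqmodXnD; rewrite // /eqmodXn -opprD dvdpNr. Qed.

Lemma eqmodXnM p r p' r' :
  p = r %[modXn N] -> p' = r' %[modXn N] -> p * p' = r * r' %[modXn N].
Proof.
move=> H H'; rewrite /eqmodXn (_ : p * p' - r * r' = (p - r) * p' + r * (p' - r')).
  by apply: dvdp_add; [apply: dvdp_mulr | apply: dvdp_mull].
by ring.
Qed.

Lemma eqmodXnMl t p r : p = r %[modXn N] -> t * p = t * r %[modXn N].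
Proof. exact/eqmodXnM/eqmodXn_refl. Qed.

Lemma eqmodXnZ c p r : p = r %[modXn N] -> c *: p = c *: r %[modXn N].
Proof. by rewrite -!mul_polyC; apply: eqmodXnMl. Qed.

Lemma eqmodXn_sum (I : Type) (s : seq I) (P : pred I) (f g : I -> {poly F}) :
  (forall i, P i -> f i = g i %[modXn N]) ->
  \sum_(i <- s | P i) f i = \sum_(i <- s | P i) g i %[modXn N].
Proof.
move=> Hfg; apply: (big_ind2 (eqmodXn N)) => //; first exact: eqmodXn_refl.
exact: eqmodXnD.
Qed.

(* A unit constant term makes t coprime to 'X, hence cancellable. *)
Lemma eqmodXn_mulIr t p r : t`_0 != 0 ->
  p * t = r * t %[modXn N] -> p = r %[modXn N].
Proof.
move=> t0; rewrite /eqmodXn -mulrBl Gauss_dvdpl //.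
by apply: coprimep_expl; rewrite coprimep_sym coprimepX /root horner_coef0.
Qed.

Lemma eqmodXn_comp c p r : p = r %[modXn N] ->
  p \Po (c%:P * 'X) = r \Po (c%:P * 'X) %[modXn N].
Proof.
move=> /divpK Hpr; rewrite /eqmodXn -comp_polyB -Hpr comp_polyM comp_Xn_poly.
by rewrite exprMn mulrA dvdp_mull.
Qed.

Lemma eqmodXn_multiple t u v p r :
  u = v %[modXn N] -> p - r = t * (u - v) -> p = r %[modXn N].
Proof. by move=> Huv; rewrite /eqmodXn => ->; apply: dvdp_mull. Qed.

End CongruenceModXn.

Lemma eqmodXn_mul_dvdXn (F : fieldType) k N (t p r : {poly F}) : 'X^k %| t ->
  p = r %[modXn N] -> t * p = t * r %[modXn k + N].
Proof. by move=> Ht Hpr; rewrite /eqmodXn -mulrBr exprD dvdp_mul. Qed.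

Lemma exchange_big_triangle (V : nmodType) M (f : nat -> nat -> V) :
  \sum_(j < M) \sum_(k < j.+1) f j k = \sum_(k < M) \sum_(k <= j < M) f j k.
Proof.
elim: M => [|M IHM]; first by rewrite !big_ord0.
rewrite big_ord_recr /= IHM.
under [RHS]eq_bigr => k _ do rewrite big_nat_recr 1?(leq_ord k) //.
by rewrite big_split /= [X in _ = X + _]big_ord_recr /= big_geq ?addr0.
Qed.

Lemma eqmodXn_geometric (F : fieldType) M (y : F) :
  (1 - y%:P * 'X) * \sum_(k < M) y ^+ k *: 'X^k = 1 %[modXn M].
Proof.
under eq_bigr do rewrite -mul_polyC rmorphXn -exprMn.
rewrite -[1 - _]opprB mulNr -subrX1 opprB /eqmodXn addrAC subrr add0r dvdpNr.
by rewrite exprMn dvdp_mull.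
Qed.

Section QPochhammer.
Variables (F : comRingType) (q : F).

Lemma qpochS c n : qpoch c q n.+1 = qpoch c q n * (1 - c * q ^+ n).
Proof. by rewrite /qpoch big_ord_recr. Qed.

Lemma qpochPS c n : qpochP c q n.+1 = qpochP c q n * (1 - (c * q ^+ n)%:P * 'X).
Proof. by rewrite /qpochP big_ord_recr. Qed.

Lemma qpochP_coef0 c n : (qpochP c q n)`_0 = 1.
Proof.
elim: n => [|n IHn]; first by rewrite /qpochP big_ord0 coef1.
by rewrite qpochPS -horner_coef0 hornerM horner_coef0 IHn !hornerE; ring.
Qed.

Lemma qpochPD c k m : qpochP c q (k + m) = qpochP c q k * qpochP (c * q ^+ k) q m.
Proof.
elim: m => [|m IHm]; first by rewrite addn0 /qpochP big_ord0 mulr1.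
by rewrite addnS !qpochPS IHm -mulrA -mulrA exprD mulrA.
Qed.

Lemma qpochP_comp c k m :
  qpochP c q m \Po ((q ^+ k)%:P * 'X) = qpochP (c * q ^+ k) q m.
Proof.
elim: m => [|m IHm]; first by rewrite /qpochP !big_ord0 comp_polyC.
rewrite !qpochPS comp_polyM IHm comp_polyB comp_polyC comp_polyM comp_polyC.
by rewrite comp_polyX mulrA -polyCM mulrAC.
Qed.

End QPochhammer.

Lemma qpoch_neq0_le (F : idomainType) (c q : F) m n :
  (m <= n)%N -> qpoch c q n != 0 -> qpoch c q m != 0.
Proof.
move=> /subnKC <-; elim: (n - m)%N => [|k IHk]; first by rewrite addn0.
by rewrite addnS qpochS mulf_eq0 negb_or => /andP[/IHk].
Qed.

Section RowBFormula.
Variables (F : fieldType) (a b q : F) (B : nat -> nat -> F).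

Definition rowB_weight (y : F) (k : nat) : F :=
  qpoch (b / y) q k / qpoch (a / y) q k.+1 * y ^+ k.

Definition rowB_ratio (y : F) (k : nat) : F :=
  qpoch (b / y) q k / qpoch (a / y) q k * y ^+ k.

Definition rowB_formula (y : F) (n : nat) : F :=
  qpoch (b / y) q n.-1 / qpoch (a / y) q n * y ^+ n
  - a * \sum_(k < n) B (n - k)%N 1%N * q ^+ ((n - k) * k)
          * qpoch (b / y) q k / qpoch (a / y) q k.+1 * y ^+ k.

Lemma rowB_formula_sumE (V : lmodType F) n y (T : nat -> V) :
  \sum_(j < n.+1) rowB_formula y j *: T j
  = T 0%N + \sum_(k < n) rowB_weight y k *: (y *: T k.+1
      - a *: \sum_(1 <= m < n.+1 - k) B m 1 *: (q ^+ (m * k) *: T (k + m)%N)).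
Proof.
have formula0 : rowB_formula y 0 = 1.
  by rewrite /rowB_formula big_ord0 /qpoch !big_ord0 divr1 mulr1 mulr0 subr0.
rewrite big_ord_recl /= formula0 scale1r; congr (_ + _).
under eq_bigr => i _ do rewrite /bump leq0n add1n /rowB_formula scalerBl.
under [RHS]eq_bigr do rewrite scalerBr scalerA.
rewrite !sumrB; congr (_ - _).
  by apply: eq_bigr => k _; rewrite /rowB_weight /= exprSr !mulrA.
under eq_bigr do rewrite -scalerA scaler_suml.
under [RHS]eq_bigr do rewrite scalerA mulrC -scalerA.
rewrite -!scaler_sumr; congr (a *: _).
rewrite (exchange_big_triangle n (fun j k => (B (j.+1 - k) 1 * q ^+ ((j.+1 - k) * k)
  * qpoch (b / y) q k / qpoch (a / y) q k.+1 * y ^+ k) *: T j.+1)).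
apply: eq_bigr => k _; rewrite scaler_sumr -{1}[nat_of_ord k]add0n big_addn.
rewrite big_add1 subSn 1?ltnW //=; apply: eq_bigr => i _.
rewrite !scalerA -addSn addnK [(k + _)%N]addnC; congr (_ *: _).
by rewrite /rowB_weight; ring.
Qed.

End RowBFormula.

Section BasisSeries.
Variables (F : fieldType) (a b q : F).

Lemma basis_series_lt j (t : nat -> F) : is_basis_series a b q j t ->
  forall i, (i < j)%N -> t i = 0.
Proof.
move=> Ht; elim/ltn_ind => i IHi ij; have := Ht i.
rewrite big_ord_recr /= big1 ?add0r; last first.
  by move=> l _; rewrite IHi ?mul0r // (ltn_trans _ ij).
by rewrite subnn qpochP_coef0 mulr1 coefXnM ij.
Qed.

Lemma basis_series_diag j (t : nat -> F) : is_basis_series a b q j t -> t j = 1.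
Proof.
move=> Ht; have := Ht j.
rewrite big_ord_recr /= big1 ?add0r; last first.
  by move=> l _; rewrite (basis_series_lt Ht) ?mul0r.
by rewrite subnn qpochP_coef0 mulr1 coefXnM ltnn subnn qpochP_coef0.
Qed.

Variable s : nat -> nat -> F.
Hypothesis s_basis : forall j, is_basis_series a b q j (s j).

Definition trunc_basis (M j : nat) : {poly F} := \poly_(i < M) s j i.

Lemma coef_trunc_basis M j i : (i < M)%N -> (trunc_basis M j)`_i = s j i.
Proof. by move=> iM; rewrite coef_poly iM. Qed.

Lemma trunc_basis_qpochP M j :
  trunc_basis M j * qpochP b q j = 'X^j * qpochP a q j %[modXn M].
Proof.
apply/eqmodXnP => i iM; rewrite -s_basis coefM.
by apply: eq_bigr => l _; rewrite coef_trunc_basis // (leq_ltn_trans (leq_ord l)).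
Qed.

Lemma dvdXn_trunc_basis M j : 'X^j %| trunc_basis M j.
Proof.
have : trunc_basis M j = 0 %[modXn j].
  apply/eqmodXnP => i ij; rewrite coef0 coef_poly.
  by case: ifP => // _; rewrite (basis_series_lt (s_basis j)).
by rewrite /eqmodXn subr0.
Qed.

Lemma trunc_basis_free M (d : nat -> F) :
  \sum_(j < M) d j *: trunc_basis M j = 0 %[modXn M] ->
  forall j, (j < M)%N -> d j = 0.
Proof.
move=> /eqmodXnP Hd; elim/ltn_ind => i IHi iM.
have := Hd i iM; rewrite coef0 coef_sum (bigD1 (Ordinal iM)) //= big1 ?addr0.
  by rewrite coefZ coef_trunc_basis // (basis_series_diag (s_basis i)) mulr1.
move=> j /eqP ji; rewrite coefZ coef_trunc_basis //.
have [jlti | iltj] := ltnP j i; first by rewrite IHi ?mul0r.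
rewrite (basis_series_lt (s_basis j)) ?mulr0 // ltn_neqAle iltj andbT.
by apply/eqP => ij; apply: ji; apply: val_inj.
Qed.

Lemma trunc_basisS M k :
  trunc_basis M k.+1 * (1 - (b * q ^+ k)%:P * 'X)
    = 'X * (1 - (a * q ^+ k)%:P * 'X) * trunc_basis M k %[modXn M].
Proof.
apply: (@eqmodXn_mulIr _ _ (qpochP b q k)); first by rewrite qpochP_coef0 oner_eq0.
rewrite -mulrA [_ * qpochP b q k]mulrC -qpochPS.
apply: eqmodXn_trans (trunc_basis_qpochP M k.+1) _.
apply: eqmodXn_sym; apply: (eqmodXn_multiple (t := 'X * (1 - (a * q ^+ k)%:P * 'X))).
  exact: (trunc_basis_qpochP M k).
by rewrite qpochPS exprS; ring.
Qed.

Lemma trunc_basis_mul_comp M k m :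
  trunc_basis M k * (trunc_basis M m \Po ((q ^+ k)%:P * 'X))
    = q ^+ (m * k) *: trunc_basis M (k + m) %[modXn M].
Proof.
apply: (@eqmodXn_mulIr _ _ (qpochP b q (k + m))); first by rewrite qpochP_coef0 oner_eq0.
set z := (q ^+ k)%:P * 'X.
have Hk := trunc_basis_qpochP M k.
have Hm := eqmodXn_comp (q ^+ k) (trunc_basis_qpochP M m).
rewrite -/z !comp_polyM comp_Xn_poly !qpochP_comp in Hm.
apply: eqmodXn_trans (_ : _ = (trunc_basis M k * qpochP b q k) *
    ((trunc_basis M m \Po z) * qpochP (b * q ^+ k) q m) %[modXn M]) _.
  by apply: eq_eqmodXn; rewrite qpochPD; ring.
apply: eqmodXn_trans (eqmodXnM Hk Hm) _.
apply: eqmodXn_sym; rewrite -scalerAl.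
apply: eqmodXn_trans (eqmodXnZ _ (trunc_basis_qpochP M (k + m))) _.
apply: eq_eqmodXn; rewrite qpochPD /z exprMn exprD -mul_polyC mulnC exprM rmorphXn /=.
ring.
Qed.

Lemma trunc_basis_telescope M k y :
  (1 - y%:P * 'X) * (y *: trunc_basis M k.+1 - (a * q ^+ k) *: ('X * trunc_basis M k))
    = (y - a * q ^+ k) *: ('X * trunc_basis M k)
      - (y * (y - b * q ^+ k)) *: ('X * trunc_basis M k.+1) %[modXn M].
Proof.
have bq0 : (1 - (b * q ^+ k)%:P * 'X)`_0 != 0.
  by rewrite -horner_coef0 !hornerE subr0 oner_eq0.
apply: (eqmodXn_mulIr bq0); apply: (eqmodXn_multiple (trunc_basisS M k)
  (t := (1 - y%:P * 'X) * y%:P + (y * (y - b * q ^+ k))%:P * 'X)).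
by rewrite -!mul_polyC !(polyCB, polyCM); ring.
Qed.

Variable B : nat -> nat -> F.
Hypothesis B_expansion :
  forall k m : nat, \sum_(k <= n < m.+1) B n k * s n m = (m == k)%:R.

Lemma sum_B_trunc_basis k N M : (N <= M)%N ->
  \sum_(k <= j < N) B j k *: trunc_basis M j = 'X^k %[modXn N].
Proof.
move=> NM; apply/eqmodXnP => t tN; rewrite coef_sum coefXn -B_expansion.
under eq_bigr do rewrite coefZ coef_trunc_basis ?(leq_trans tN NM) //.
have vanish j : (t < j)%N -> B j k * s j t = 0.
  by move=> tj; rewrite (basis_series_lt (s_basis j)) ?mulr0.
have [kt | tk] := leqP k t.
  rewrite (@big_cat_nat _ _ _ t.+1) ?(leqW kt) //= [X in _ + X]big_nat_cond.
  by rewrite [X in _ + X]big1 ?addr0 // => j /andP[/andP[tj _] _]; apply: vanish.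
rewrite [RHS]big_geq // big_nat_cond big1 // => j /andP[/andP[kj _] _].
exact/vanish/(leq_trans tk).
Qed.

Lemma sum_B1_trunc_basis_shift M k : (k <= M)%N ->
  \sum_(1 <= m < M - k) B m 1 *: (q ^+ (m * k) *: trunc_basis M (k + m))
    = q ^+ k *: ('X * trunc_basis M k) %[modXn M].
Proof.
move=> kM; set W := \sum_(1 <= m < M - k) B m 1 *: trunc_basis M m.
have HW := eqmodXn_comp (q ^+ k) (sum_B_trunc_basis 1 (leq_subr k M)).
rewrite -/W expr1 comp_polyX in HW.
have := eqmodXn_mul_dvdXn (dvdXn_trunc_basis M k) HW.
rewrite subnKC // => HSW.
apply: eqmodXn_trans (_ : _ = trunc_basis M k * (W \Po ((q ^+ k)%:P * 'X)) %[modXn M]) _.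
  rewrite /W (big_morph (comp_poly ((q ^+ k)%:P * 'X)) (fun p r => comp_polyD p r _)
    (comp_poly0 _)) mulr_sumr.
  apply: eqmodXn_sum => m _; apply: eqmodXn_sym.
  by rewrite comp_polyZ -scalerAr; apply/eqmodXnZ/trunc_basis_mul_comp.
by apply: eqmodXn_trans HSW _; apply: eq_eqmodXn; rewrite -mul_polyC; ring.
Qed.

Lemma sum_rowB_trunc_basis M (y : F) :
  (1 - y%:P * 'X) * \sum_(j < M) (\sum_(k < j.+1) B j k * y ^+ k) *: trunc_basis M j
    = 1 %[modXn M].
Proof.
have -> : \sum_(j < M) (\sum_(k < j.+1) B j k * y ^+ k) *: trunc_basis M j
    = \sum_(k < M) y ^+ k *: \sum_(k <= j < M) B j k *: trunc_basis M j.
  under eq_bigr do rewrite scaler_suml.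
  rewrite (exchange_big_triangle M (fun j k => (B j k * y ^+ k) *: trunc_basis M j)).
  apply: eq_bigr => k _; rewrite scaler_sumr.
  by apply: eq_bigr => j _; rewrite !scalerA mulrC.
apply: eqmodXn_trans (eqmodXn_geometric M y).
apply/eqmodXnMl/eqmodXn_sum => k _.
exact/eqmodXnZ/sum_B_trunc_basis.
Qed.

Lemma sum_rowB_weight_telescope M n (y : F) :
  y != 0 -> qpoch (a / y) q n != 0 ->
  (1 - y%:P * 'X) * \sum_(k < n) rowB_weight a b q y k *:
      (y *: trunc_basis M k.+1 - (a * q ^+ k) *: ('X * trunc_basis M k))
    = y *: ('X * trunc_basis M 0)
      - (y * rowB_ratio a b q y n) *: ('X * trunc_basis M n) %[modXn M].
Proof.
move=> y0 an0; pose T k := (y * rowB_ratio a b q y k) *: ('X * trunc_basis M k).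
have -> : y *: ('X * trunc_basis M 0) = T 0%N.
  by rewrite /T /rowB_ratio /qpoch !big_ord0 expr0 divr1 !mulr1.
have -> : T 0%N - T n = \sum_(0 <= k < n) (T k - T k.+1).
  rewrite (telescope_sumr_eq (fun k => - T k)) ?opprK 1?addrC //.
  by move=> k _; rewrite opprK addrC.
rewrite big_mkord mulr_sumr; apply: eqmodXn_sum => k _.
have ak0 : qpoch (a / y) q k.+1 != 0 := qpoch_neq0_le (ltn_ord k) an0.
have := ak0; rewrite qpochS mulf_eq0 negb_or => /andP[ak0' aqk0].
have yaq0 : y - a * q ^+ k != 0.
  by rewrite (_ : _ - _ = y * (1 - a / y * q ^+ k)) ?mulf_neq0 //; field.
rewrite -scalerAr; apply: eqmodXn_trans (eqmodXnZ _ (trunc_basis_telescope _ _ _)) _.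
apply: eq_eqmodXn; rewrite scalerBr !scalerA /T /rowB_ratio /rowB_weight !qpochS exprS.
by congr (_ *: _ - _ *: _); field; rewrite y0 ak0' yaq0.
Qed.

Lemma sum_rowB_formula_trunc_basis n (y : F) :
  y != 0 -> qpoch (a / y) q n != 0 ->
  (1 - y%:P * 'X) * \sum_(j < n.+1) rowB_formula a b q B y j *: trunc_basis n.+1 j
    = 1 %[modXn n.+1].
Proof.
move=> y0 an0; rewrite rowB_formula_sumE.
have shift : \sum_(k < n) rowB_weight a b q y k *: (y *: trunc_basis n.+1 k.+1
      - a *: \sum_(1 <= m < n.+1 - k) B m 1 *: (q ^+ (m * k) *: trunc_basis n.+1 (k + m)))
    = \sum_(k < n) rowB_weight a b q y k *: (y *: trunc_basis n.+1 k.+1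
      - (a * q ^+ k) *: ('X * trunc_basis n.+1 k)) %[modXn n.+1].
  apply: eqmodXn_sum => k _; apply/eqmodXnZ/eqmodXnB; first exact: eqmodXn_refl.
  by rewrite -scalerA; apply/eqmodXnZ/sum_B1_trunc_basis_shift/leqW/ltnW.
apply: eqmodXn_trans (eqmodXnMl _ (eqmodXnD (eqmodXn_refl _ _) shift)) _.
rewrite mulrDr.
apply: eqmodXn_trans (eqmodXnD (eqmodXn_refl _ _) (sum_rowB_weight_telescope _ y0 an0)) _.
have S0 : trunc_basis n.+1 0 = 1 %[modXn n.+1].
  by move: (trunc_basis_qpochP n.+1 0); rewrite /qpochP !big_ord0 expr0 !mulr1.
have Xn_tail : (y * rowB_ratio a b q y n) *: ('X * trunc_basis n.+1 n) = 0 %[modXn n.+1].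
  rewrite /eqmodXn subr0 -mul_polyC exprS.
  by apply/dvdp_mull/dvdp_mul/dvdXn_trunc_basis.
rewrite -(subr0 1) (_ : _ + _ = trunc_basis n.+1 0
    - (y * rowB_ratio a b q y n) *: ('X * trunc_basis n.+1 n)).
  exact: eqmodXnB.
by rewrite -!mul_polyC; ring.
Qed.

Lemma sum_rowB_eq_formula n (y : F) : y != 0 -> qpoch (a / y) q n != 0 ->
  \sum_(k < n.+1) B n k * y ^+ k = rowB_formula a b q B y n.
Proof.
move=> y0 an0; apply/eqP; rewrite -subr_eq0; apply/eqP.
pose d j := \sum_(k < j.+1) B j k * y ^+ k - rowB_formula a b q B y j.
apply: (trunc_basis_free (d := d) _ (ltnSn n)).
have yX0 : (1 - y%:P * 'X)`_0 != 0 by rewrite -horner_coef0 !hornerE subr0 oner_eq0.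
apply: (eqmodXn_mulIr yX0); rewrite mul0r mulrC.
under eq_bigr do rewrite scalerBl.
rewrite sumrB mulrBr; apply: eqmodXn_trans (eq_eqmodXn _ (subrr 1)).
exact: eqmodXnB (sum_rowB_trunc_basis _ _) (sum_rowB_formula_trunc_basis y0 an0).
Qed.

End BasisSeries.

Unset Implicit Arguments.

Theorem corollary2p1 (R : realType) (a b q : R[i])
  (s : nat -> nat -> R[i]) (B : nat -> nat -> R[i]) :
  q != 0 ->
  (* s n = coefficients of z^n (az;q)_n/(bz;q)_n *)
  (forall n, is_basis_series a b q n (s n)) ->
  (* z^k = sum_{n>=k} B_{n,k} z^n (az;q)_n/(bz;q)_n, compared coefficientwise
     (coefficient of z^m; terms with n > m have no z^m coefficient) *)
  (forall k m : nat, \sum_(k <= n < m.+1) B n k * s n m = (m == k)%:R) ->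
  forall (n : nat), (1 <= n)%N ->
  forall y : R[i], y != 0 -> qpoch (a / y) q n != 0 ->
    \sum_(k < n.+1) B n k * y ^+ k =
      qpoch (b / y) q n.-1 / qpoch (a / y) q n * y ^+ n
      - a * \sum_(k < n) B (n - k)%N 1%N * q ^+ ((n - k) * k)
              * qpoch (b / y) q k / qpoch (a / y) q k.+1 * y ^+ k.
Proof.
move=> _ s_basis B_expansion n _ y y0 an0.
exact: (sum_rowB_eq_formula s_basis B_expansion y0 an0).
Qed.
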